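(* Let $m\ge2$ and let $\mathcal{A}\in\mathbb{S}_{m,n}$ be strongly completely positive. Then (i) all H-eigenvalues of $\mathcal{A}$ are positive; (ii) all Z-eigenvalues of $\mathcal{A}$ are nonzero; moreover, when $m$ is even all Z-eigenvalues of $\mathcal{A}$ are positive, and when $m$ is odd a Z-eigenvector associated with a positive (respectively negative) Z-eigenvalue of $\mathcal{A}$ is nonnegative (respectively nonpositive).
   Context: $\mathbb{S}_{m,n}$: symmetric real $m$th order $n$-dimensional tensors. $(u^m)_{i_1\ldots i_m}=u_{i_1}\cdots u_{i_m}$; $(\mathcal{A}x^{m-1})_i=\sum_{i_2,\dots,i_m}a_{ii_2\ldots i_m}x_{i_2}\cdots x_{i_m}$; $x^{[m-1]}=(x_i^{m-1})_i$. $\lambda\in\mathbb{R}$ is an H-eigenvalue if $\mathcal{A}x^{m-1}=\lambda x^{[m-1]}$ for some $x\in\mathbb{R}^n\setminus\{0\}$. $\lambda\in\mathbb{R}$ is a Z-eigenvalue with Z-eigenvector $x\in\mathbb{R}^n$ if $\mathcal{A}x^{m-1}=\lambda x$ and $x^Tx=1$. $\mathcal{A}$ is strongly completely positive if $\mathcal{A}=\sum_{k=1}^r(u^{(k)})^m$ with $u^{(k)}\in\mathbb{R}^n_+$ and $\mathrm{span}\{u^{(1)},\dots,u^{(r)}\}=\mathbb{R}^n$. *)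

From HB Require Import structures.
From mathcomp Require Import all_boot all_order all_algebra all_fingroup.
Set Implicit Arguments. Unset Strict Implicit. Unset Printing Implicit Defensive.
Import Order.TTheory GRing.Theory Num.Theory.
Local Open Scope ring_scope.

Definition tensor (R : Type) (m n : nat) := {ffun 'I_m -> 'I_n} -> R.

Definition symmetric_tensor (R : Type) (m n : nat) (A : tensor R m n) : Prop :=
  forall (idx : {ffun 'I_m -> 'I_n}) (s : 'S_m),
    A [ffun j => idx (s j)] = A idx.

Definition tpow (R : realFieldType) (m n : nat) (u : 'I_n -> R) : tensor R m n :=
  fun idx => \prod_(j < m) u (idx j).

(* (A x^{m-1})_i = sum_{i_2..i_m} a_{i i_2 ... i_m} x_{i_2} ... x_{i_m};
   the first index position is the one with value 0. *)
Definition tapply (R : realFieldType) (m n : nat) (A : tensor R m n)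
  (x : 'I_n -> R) (i : 'I_n) : R :=
  \sum_(idx : {ffun 'I_m -> 'I_n} |
          [forall j : 'I_m, (val j == 0%N) ==> (idx j == i)])
     A idx * \prod_(j : 'I_m | val j != 0%N) x (idx j).

Definition H_eigenvalue (R : realFieldType) (m n : nat) (A : tensor R m n)
  (lambda : R) : Prop :=
  exists x : 'I_n -> R, (exists i, x i != 0) /\
    forall i, tapply A x i = lambda * x i ^+ m.-1.

Definition Z_eigenpair (R : realFieldType) (m n : nat) (A : tensor R m n)
  (lambda : R) (x : 'I_n -> R) : Prop :=
  (forall i, tapply A x i = lambda * x i) /\ \sum_(i < n) x i ^+ 2 = 1.

Definition Z_eigenvalue (R : realFieldType) (m n : nat) (A : tensor R m n)
  (lambda : R) : Prop :=
  exists x, Z_eigenpair A lambda x.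

(* Strongly completely positive: A = sum_k (u^(k))^m with u^(k) >= 0
   entrywise and span{u^(1),...,u^(r)} = R^n (the matrix with rows u^(k)
   is row-full). *)
Definition strongly_completely_positive (R : realFieldType) (m n : nat)
  (A : tensor R m n) : Prop :=
  exists (r : nat) (u : 'I_r -> 'I_n -> R),
    (forall k i, 0 <= u k i) /\
    (forall idx, A idx = \sum_(k < r) @tpow R m n (u k) idx) /\
    row_full (\matrix_(k < r, i < n) u k i).

(* Write A = sum_k u_k^m with m = p + 1.  Then (A x^(m-1))_i = sum_k u_k,i (u_k.x)^p and
   x.(A x^(m-1)) = sum_k (u_k.x)^m, and since the u_k span R^n, u_k.x = 0 for all k forces
   x = 0.  For m even the form x.(A x^(m-1)) is therefore positive definite.  For m odd,
   p is even, so every entry of A x^(m-1) is nonnegative, and all of them vanish only at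
   x = 0.  Comparing these facts with the eigen-equations gives the signs of the
   eigenvalues and, for m odd, of the Z-eigenvectors. *)
From mathcomp Require Import all_boot all_order all_algebra.
From mathcomp Require Import ring.
Set Implicit Arguments.
Unset Strict Implicit.
Unset Printing Implicit Defensive.

Import Order.TTheory GRing.Theory Num.Theory.
Local Open Scope ring_scope.

Definition vdot (R : nzRingType) (n : nat) (v x : 'I_n -> R) : R :=
  \sum_(l < n) v l * x l.

Lemma row_full_vdot_eq0 (R : fieldType) (r n : nat) (u : 'I_r -> 'I_n -> R)
    (x : 'I_n -> R) :
  row_full (\matrix_(k < r, i < n) u k i) ->
  (forall k, vdot (u k) x = 0) -> forall l, x l = 0.
Proof.
move=> hfull hux l.
have hU : (\matrix_(k < r, i < n) u k i) *m (\col_(i < n) x i) =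
          (\matrix_(k < r, i < n) u k i) *m 0.
  rewrite mulmx0; apply/matrixP => k j; rewrite !mxE -[RHS](hux k).
  by apply: eq_bigr => i _; rewrite !mxE.
have := congr1 (fun M : 'M_(n, 1) => M l ord0) (row_full_inj hfull hU).
by rewrite !mxE.
Qed.

Lemma sum_ffun_head_prod_tail (R : comNzRingType) (p n : nat) (i : 'I_n)
    (G : 'I_n -> R) :
  \sum_(idx : {ffun 'I_p.+1 -> 'I_n} | idx ord0 == i)
     \prod_(j < p.+1 | j != ord0) G (idx j) = (\sum_l G l) ^+ p.
Proof.
(* Expand \prod_j \sum_l H j l, where row 0 of H is the indicator of i. *)
pose H (j : 'I_p.+1) (l : 'I_n) := if j == ord0 then (l == i)%:R else G l.
have := bigA_distr_bigA (one := 1) (times := *%R) (plus := +%R) H.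
rewrite big_ord_recl /= /H eqxx (bigD1 i) //= eqxx big1 ?addr0; last first.
  by move=> l /negbTE ->.
rewrite prodr_const card_ord mul1r => ->.
rewrite big_mkcond; apply: eq_bigr => idx _.
rewrite [RHS]big_ord_recl big_mkcond big_ord_recl /=.
by case: eqP => _; rewrite ?mul1r ?mul0r.
Qed.

Lemma Z_eigenpair_value (R : realFieldType) (m n : nat) (A : tensor R m n)
    (lambda : R) (x : 'I_n -> R) :
  Z_eigenpair A lambda x -> lambda = \sum_i x i * tapply A x i.
Proof.
move=> [hx hnorm]; rewrite -[lambda]mulr1 -hnorm mulr_sumr.
by apply: eq_bigr => i _; rewrite hx; ring.
Qed.

Lemma Z_eigenvector_neq0 (R : realFieldType) (m n : nat) (A : tensor R m n)
    (lambda : R) (x : 'I_n -> R) :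
  Z_eigenpair A lambda x -> ~ (forall l, x l = 0).
Proof.
move=> [_ hnorm] hx0; move: hnorm; rewrite big1 => [/eqP|i _].
  by rewrite eq_sym oner_eq0.
by rewrite hx0 expr0n.
Qed.

Section SumOfPowers.

Variables (R : realFieldType) (p r n : nat) (u : 'I_r -> 'I_n -> R).
Variable A : tensor R p.+1 n.
Hypothesis hA : forall idx, A idx = \sum_(k < r) tpow (u k) idx.

Lemma tapply_sum_tpow x i :
  tapply A x i = \sum_(k < r) u k i * vdot (u k) x ^+ p.
Proof.
rewrite /tapply (eq_bigl (fun idx : {ffun 'I_p.+1 -> 'I_n} => idx ord0 == i)).
  under eq_bigr => idx _ do rewrite hA mulr_suml.
  rewrite exchange_big /=; apply: eq_bigr => k _.
  rewrite -(sum_ffun_head_prod_tail p i) mulr_sumr.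
  apply: eq_big => // idx /eqP idx0.
  by rewrite /tpow (bigD1 ord0) //= idx0 -mulrA -big_split.
move=> idx; apply/forallP/eqP => [/(_ ord0) /implyP /(_ isT) /eqP //| <- j].
by apply/implyP => /eqP j0; rewrite (_ : j = ord0) //; apply: val_inj.
Qed.

Lemma vdot_tapply x :
  \sum_i x i * tapply A x i = \sum_(k < r) vdot (u k) x ^+ p.+1.
Proof.
under eq_bigr => i _ do rewrite tapply_sum_tpow mulr_sumr.
rewrite exchange_big /=; apply: eq_bigr => k _.
by rewrite exprS mulrC mulr_sumr; apply: eq_bigr => i _; ring.
Qed.

Hypotheses (hu : forall k i, 0 <= u k i)
           (hfull : row_full (\matrix_(k < r, i < n) u k i)).

Section EvenOrder.

Hypothesis heven : ~~ odd p.+1.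

Lemma vdot_tapply_gt0 x :
  ~ (forall l, x l = 0) -> 0 < \sum_i x i * tapply A x i.
Proof.
move=> hx; have hpow k : 0 <= vdot (u k) x ^+ p.+1 by exact: exprn_even_ge0.
rewrite vdot_tapply lt_def sumr_ge0 ?andbT //; apply/eqP => hsum.
apply/hx/(row_full_vdot_eq0 hfull) => k.
have /eqP := psumr_eq0P (fun k _ => hpow k) hsum (i := k) isT.
by rewrite expf_eq0 => /andP[_ /eqP].
Qed.

Lemma Z_eigenvalue_gt0_even lambda : Z_eigenvalue A lambda -> 0 < lambda.
Proof.
move=> [x hZ]; rewrite (Z_eigenpair_value hZ).
exact/vdot_tapply_gt0/(Z_eigenvector_neq0 hZ).
Qed.

End EvenOrder.

Section OddOrder.

Hypothesis hodd : odd p.+1.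

Lemma tapply_ge0 x i : 0 <= tapply A x i.
Proof.
rewrite tapply_sum_tpow sumr_ge0 // => k _.
by rewrite mulr_ge0 // exprn_even_ge0.
Qed.

(* Each summand u_k,i (u_k.x)^p vanishes; summing them against x_i gives (u_k.x)^(p+1) = 0. *)
Lemma tapply_eq0 x : (forall i, tapply A x i = 0) -> forall l, x l = 0.
Proof.
move=> hx; apply: (row_full_vdot_eq0 hfull) => k.
have hterm i : u k i * vdot (u k) x ^+ p = 0.
  have hge0 k' : 0 <= u k' i * vdot (u k') x ^+ p.
    by rewrite mulr_ge0 // exprn_even_ge0.
  have hsum : \sum_(k' < r) u k' i * vdot (u k') x ^+ p = 0.
    by rewrite -tapply_sum_tpow hx.
  exact: (psumr_eq0P (fun k' _ => hge0 k') hsum (i := k) isT).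
have /eqP : vdot (u k) x ^+ p.+1 = 0.
  by rewrite exprS /vdot mulr_suml big1 // => i _; rewrite mulrAC hterm mul0r.
by rewrite expf_eq0 => /andP[_ /eqP].
Qed.

Lemma Z_eigenpair_odd_sign lambda x :
  Z_eigenpair A lambda x -> forall i, 0 <= lambda * x i.
Proof. by move=> [hx _] i; rewrite -hx tapply_ge0. Qed.

End OddOrder.

Lemma H_eigenvalue_gt0 lambda : H_eigenvalue A lambda -> 0 < lambda.
Proof.
move=> [x [[i0 hx0] hx]].
have hx0' : ~ (forall l, x l = 0) by move/(_ i0)/eqP; exact/negP.
have [hodd|heven] := boolP (odd p.+1).
  rewrite ltNge; apply/negP => hlambda; apply/hx0'/tapply_eq0 => // i.
  apply/eqP; rewrite eq_le tapply_ge0 // hx mulr_le0_ge0 //.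
  by rewrite exprn_even_ge0.
have hpow : 0 < \sum_i x i ^+ p.+1.
  have hge0 i : 0 <= x i ^+ p.+1 by exact: exprn_even_ge0.
  rewrite lt_def sumr_ge0 ?andbT //; apply/eqP => hsum.
  have /eqP := psumr_eq0P (fun i _ => hge0 i) hsum (i := i0) isT.
  by rewrite expf_eq0 (negbTE hx0) andbF.
have := vdot_tapply_gt0 heven hx0'.
have -> : \sum_i x i * tapply A x i = lambda * \sum_i x i ^+ p.+1.
  by rewrite mulr_sumr; apply: eq_bigr => i _; rewrite hx exprS; ring.
by rewrite pmulr_lgt0.
Qed.

Lemma Z_eigenvalue_neq0 lambda : Z_eigenvalue A lambda -> lambda != 0.
Proof.
move=> hZ; have [hodd|heven] := boolP (odd p.+1); last first.
  by rewrite gt_eqF // (Z_eigenvalue_gt0_even heven).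
case: hZ => x hZ; apply/eqP => hlambda; apply: (Z_eigenvector_neq0 hZ).
by apply: tapply_eq0 => // i; case: hZ => hx _; rewrite hx hlambda mul0r.
Qed.

End SumOfPowers.

Theorem mainTheorem7 (R : realFieldType) (m n : nat) (A : tensor R m n)
  (hm : (2 <= m)%N) (hsym : symmetric_tensor A)
  (hscp : strongly_completely_positive A) :
  (forall lambda : R, H_eigenvalue A lambda -> 0 < lambda) /\
  (forall lambda : R, Z_eigenvalue A lambda -> lambda != 0) /\
  (~~ odd m -> forall lambda : R, Z_eigenvalue A lambda -> 0 < lambda) /\
  (odd m -> forall (lambda : R) (x : 'I_n -> R), Z_eigenpair A lambda x ->
     (0 < lambda -> forall i, 0 <= x i) /\
     (lambda < 0 -> forall i, x i <= 0)).
Proof.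
case: m A hm hsym hscp => [//|p] A _ _ [r [u [hu [hA hfull]]]].
split; first exact: H_eigenvalue_gt0 hA hu hfull.
split; first exact: Z_eigenvalue_neq0 hA hu hfull.
split; first exact: Z_eigenvalue_gt0_even hA hfull.
move=> hodd lambda x hZ; have hsign := Z_eigenpair_odd_sign hA hu hodd hZ.
by split=> hlambda i; have := hsign i; [rewrite pmulr_rge0 | rewrite nmulr_rge0].
Qed.
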